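(* Let $\mathcal{C}$ be a category, $\rho$ a canonical PBPO rule with components $l : K \to L$, $r : K \to R$, $t_L : L \to L'$, $t_K : K \to K'$, $t_R : R \to R'$, $l' : K' \to L'$, $r' : K' \to R'$. Let $G_L$ be an object and let $m' \circ e : L \to G_L$ be a morphism with $m' : L_c \rightarrowtail G_L$ a monomorphism and $e : L \twoheadrightarrow L_c$ an epimorphism, and assume $t_L = t_{L_c} \circ e$ for some (necessarily unique) $t_{L_c} : L_c \to L'$ and that the compacted rule $\rho_e$ exists. Then for all $\alpha : G_L \to L'$ and all objects $G_R$: $G_L \Rightarrow_\rho^{(m' \circ e),\alpha} G_R$ if and only if $G_L \Rightarrow_{\rho_e}^{m',\alpha} G_R$.
   Context: A PBPO rule consists of objects $L,K,R,L',K',R'$ and morphisms $l : K \to L$, $r : K \to R$, $t_L : L \to L'$, $t_K : K \to K'$, $t_R : R \to R'$, $l' : K' \to L'$, $r' : K' \to R'$ with $t_L \circ l = l' \circ t_K$ and $t_R \circ r = r' \circ t_K$. It is canonical if $L \xleftarrow{l} K \xrightarrow{t_K} K'$ is a pullback of $t_L, l'$ and $K' \xrightarrow{r'} R' \xleftarrow{t_R} R$ is a pushout of $t_K, r$. A PBPO rewrite step $G_L \Rightarrow_\rho^{m,\alpha} G_R$ is given by morphisms $m : L \to G_L$, $\alpha : G_L \to L'$ with $t_L = \alpha \circ m$; a pullback $G_L \xleftarrow{g_L} G_K \xrightarrow{u'} K'$ of $\alpha$ and $l'$; the unique $u : K \to G_K$ with $g_L \circ u = m \circ l$ and $u' \circ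 u = t_K$; a pushout $G_K \xrightarrow{g_R} G_R \xleftarrow{w} R$ of $u$ and $r$; and the unique $w' : G_R \to R'$ with $w' \circ g_R = r' \circ u'$ and $w' \circ w = t_R$. Compacted rule: for a canonical PBPO rule $\rho$ and a factorization $t_L = t_{L_c} \circ e$ with $e : L \to L_c$ epi, let $L_c \xleftarrow{k} K_c \xrightarrow{t_{K_c}} K'$ be a pullback of $t_{L_c}$ and $l'$; let $e_K : K \to K_c$ be the unique morphism with $k \circ e_K = e \circ l$ and $t_{K_c} \circ e_K = t_K$; let $K_c \xrightarrow{r_c} R_c \xleftarrow{e_R} R$ be a pushout of $e_K$ and $r$; and let $t_{R_c} : R_c \to R'$ be the unique morphism with $t_{R_c} \circ r_c = r' \circ t_{K_c}$ and $t_{R_c} \circ e_R = t_R$. The compacted rule $\rho_e$ is the (canonical) PBPO rule with $L_c \xleftarrow{k} K_c \xrightarrow{r_c} R_c$, $L' \xleftarrow{l'} K' \xrightarrow{r'} R'$ and typings $t_{L_c}, t_{K_c}, t_{R_c}$. *)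

Record Category := {
  Ob :> Type;
  Hom : Ob -> Ob -> Type;
  comp : forall A B C : Ob, Hom B C -> Hom A B -> Hom A C;
  idm : forall A : Ob, Hom A A;
  comp_assoc : forall (A B C D : Ob) (h : Hom C D) (g : Hom B C) (f : Hom A B),
      comp A C D h (comp A B C g f) = comp A B D (comp B C D h g) f;
  comp_id_left : forall (A B : Ob) (f : Hom A B), comp A B B (idm B) f = f;
  comp_id_right : forall (A B : Ob) (f : Hom A B), comp A A B f (idm A) = f
}.

Arguments Hom {c} _ _.
Arguments comp {c A B C} _ _.
Arguments idm {c} _.

Notation "g \oc f" := (comp g f) (at level 40, left associativity).

Section CatNotions.
Context {C : Category}.

Definition IsMono {A B : C} (f : Hom A B) : Prop :=
  forall (X : C) (g h : Hom X A), f \oc g = f \oc h -> g = h.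

Definition IsEpi {A B : C} (f : Hom A B) : Prop :=
  forall (X : C) (g h : Hom B X), g \oc f = h \oc f -> g = h.

Definition IsPullback {A B Z P : C} (f : Hom A Z) (g : Hom B Z)
  (p1 : Hom P A) (p2 : Hom P B) : Prop :=
  f \oc p1 = g \oc p2 /\
  forall (Q : C) (q1 : Hom Q A) (q2 : Hom Q B), f \oc q1 = g \oc q2 ->
    exists u : Hom Q P, (p1 \oc u = q1 /\ p2 \oc u = q2) /\
      forall u' : Hom Q P, p1 \oc u' = q1 -> p2 \oc u' = q2 -> u' = u.

Definition IsPushout {A B Z P : C} (f : Hom Z A) (g : Hom Z B)
  (q1 : Hom A P) (q2 : Hom B P) : Prop :=
  q1 \oc f = q2 \oc g /\
  forall (Q : C) (h1 : Hom A Q) (h2 : Hom B Q), h1 \oc f = h2 \oc g ->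
    exists u : Hom P Q, (u \oc q1 = h1 /\ u \oc q2 = h2) /\
      forall u' : Hom P Q, u' \oc q1 = h1 -> u' \oc q2 = h2 -> u' = u.

Definition pbpo_step {L K R L' K' R' : C}
  (l : Hom K L) (r : Hom K R)
  (tL : Hom L L') (tK : Hom K K') (tR : Hom R R')
  (l' : Hom K' L') (r' : Hom K' R')
  (GL GR : C) (m : Hom L GL) (alpha : Hom GL L') : Prop :=
  tL = alpha \oc m /\
  exists (GK : C) (gL : Hom GK GL) (u' : Hom GK K'),
    IsPullback alpha l' gL u' /\
    exists u : Hom K GK,
      gL \oc u = m \oc l /\ u' \oc u = tK /\
      exists (gR : Hom GK GR) (w : Hom R GR),
        IsPushout u r gR w /\
        exists w' : Hom GR R', w' \oc gR = r' \oc u' /\ w' \oc w = tR.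

End CatNotions.

Record PBPORule (C : Category) := {
  rL : C; rK : C; rR : C; rL' : C; rK' : C; rR' : C;
  rl : Hom rK rL; rr : Hom rK rR;
  rtL : Hom rL rL'; rtK : Hom rK rK'; rtR : Hom rR rR';
  rl' : Hom rK' rL'; rr' : Hom rK' rR';
  rcomm_L : rtL \oc rl = rl' \oc rtK;
  rcomm_R : rtR \oc rr = rr' \oc rtK
}.

Arguments rL {C}. Arguments rK {C}. Arguments rR {C}.
Arguments rL' {C}. Arguments rK' {C}. Arguments rR' {C}.
Arguments rl {C}. Arguments rr {C}. Arguments rtL {C}. Arguments rtK {C}.
Arguments rtR {C}. Arguments rl' {C}. Arguments rr' {C}.

Definition canonical {C : Category} (rho : PBPORule C) : Prop :=
  IsPullback (rtL rho) (rl' rho) (rl rho) (rtK rho) /\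
  IsPushout (rtK rho) (rr rho) (rr' rho) (rtR rho).

Definition step {C : Category} (rho : PBPORule C) (GL GR : C)
  (m : Hom (rL rho) GL) (alpha : Hom GL (rL' rho)) : Prop :=
  pbpo_step (rl rho) (rr rho) (rtL rho) (rtK rho) (rtR rho) (rl' rho) (rr' rho)
    GL GR m alpha.

(* The data (K_c, k, t_Kc, e_K, R_c, r_c, e_R, t_Rc) constitute the compacted
   rule rho_e for the factorization t_L = t_Lc o e, exactly as in the paper. *)
Definition is_compaction {C : Category} (rho : PBPORule C)
  {Lc : C} (e : Hom (rL rho) Lc) (tLc : Hom Lc (rL' rho))
  {Kc Rc : C} (k : Hom Kc Lc) (tKc : Hom Kc (rK' rho)) (eK : Hom (rK rho) Kc)
  (rc : Hom Kc Rc) (eR : Hom (rR rho) Rc) (tRc : Hom Rc (rR' rho)) : Prop :=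
  IsPullback tLc (rl' rho) k tKc /\
  k \oc eK = e \oc rl rho /\ tKc \oc eK = rtK rho /\
  IsPushout eK (rr rho) rc eR /\
  tRc \oc rc = rr' rho \oc tKc /\ tRc \oc eR = rtR rho.


(* Both steps use the same pullback G_K of alpha along l'. Since
   t_Lc = alpha o m' (e is epi), the pullback square of K_c maps into G_K by
   some u_c, and u = u_c o e_K because G_K is a pullback. The pushout of u and
   r is then the pasting of the pushout square defining R_c with the pushout
   of u_c and r_c, so either one yields the other with the same G_R. *)

Section UniversalSquares.
Context {C : Category}.

Lemma pullback_jointly_mono {A B Z P : C} {f : Hom A Z} {g : Hom B Z}
  {p1 : Hom P A} {p2 : Hom P B} :
  IsPullback f g p1 p2 ->
  forall (Q : C) (x y : Hom Q P),
    p1 \oc x = p1 \oc y -> p2 \oc x = p2 \oc y -> x = y.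
Proof.
  intros [Hsq Hup] Q x y H1 H2.
  destruct (Hup Q (p1 \oc x) (p2 \oc x)) as [z [_ Hz]].
  { rewrite !comp_assoc, Hsq. reflexivity. }
  rewrite (Hz x eq_refl eq_refl). symmetry. apply Hz; symmetry; assumption.
Qed.

Lemma pushout_jointly_epi {A B Z P : C} {f : Hom Z A} {g : Hom Z B}
  {q1 : Hom A P} {q2 : Hom B P} :
  IsPushout f g q1 q2 ->
  forall (Q : C) (x y : Hom P Q),
    x \oc q1 = y \oc q1 -> x \oc q2 = y \oc q2 -> x = y.
Proof.
  intros [Hsq Hup] Q x y H1 H2.
  destruct (Hup Q (x \oc q1) (x \oc q2)) as [z [_ Hz]].
  { rewrite <- !comp_assoc, Hsq. reflexivity. }
  rewrite (Hz x eq_refl eq_refl). symmetry. apply Hz; symmetry; assumption.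
Qed.

Section Pasting.
Context {Z A B A' P P' : C} {f : Hom Z A} {g : Hom Z B}
  {q1 : Hom A P} {q2 : Hom B P} {h : Hom A A'} {q1' : Hom A' P'}.
Hypothesis Hleft : IsPushout f g q1 q2.

Lemma pushout_paste {q2' : Hom P P'} :
  IsPushout h q1 q1' q2' -> IsPushout (h \oc f) g q1' (q2' \oc q2).
Proof.
  intros [Hsq Hup]. split.
  { rewrite comp_assoc, Hsq, <- !comp_assoc, (proj1 Hleft). reflexivity. }
  intros Q k1 k2 Hk.
  destruct (proj2 Hleft Q (k1 \oc h) k2) as [z [[Hz1 Hz2] _]].
  { rewrite <- comp_assoc. exact Hk. }
  destruct (Hup Q k1 z) as [v [[Hv1 Hv2] Hvu]]; [symmetry; exact Hz1|].
  exists v. split.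
  - split; [exact Hv1|]. rewrite comp_assoc, Hv2. exact Hz2.
  - intros v' Hv'1 Hv'2. apply Hvu; [exact Hv'1|].
    apply (pushout_jointly_epi Hleft).
    + rewrite <- comp_assoc, <- Hsq, comp_assoc, Hv'1, Hz1. reflexivity.
    + rewrite <- comp_assoc, Hv'2, Hz2. reflexivity.
Qed.

Lemma pushout_cancel_left {w : Hom B P'} :
  IsPushout (h \oc f) g q1' w ->
  exists q2' : Hom P P', q2' \oc q2 = w /\ IsPushout h q1 q1' q2'.
Proof.
  intros [Hsq Hup].
  destruct (proj2 Hleft P' (q1' \oc h) w) as [q2' [[Hq1 Hq2] _]].
  { rewrite <- comp_assoc. exact Hsq. }
  exists q2'. split; [exact Hq2|]. split; [symmetry; exact Hq1|].
  intros Q k1 k2 Hk.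
  destruct (Hup Q k1 (k2 \oc q2)) as [v [[Hv1 Hv2] Hvu]].
  { rewrite comp_assoc, Hk, <- !comp_assoc, (proj1 Hleft). reflexivity. }
  exists v. split.
  - split; [exact Hv1|]. apply (pushout_jointly_epi Hleft).
    + rewrite <- comp_assoc, Hq1, comp_assoc, Hv1. exact Hk.
    + rewrite <- comp_assoc, Hq2. exact Hv2.
  - intros v' Hv'1 Hv'2. apply Hvu; [exact Hv'1|].
    rewrite <- Hq2, comp_assoc, Hv'2. reflexivity.
Qed.

End Pasting.
End UniversalSquares.

Section CompactedStep.
Context {C : Category} {rho : PBPORule C} {GL Lc Kc Rc : C}
  {m' : Hom Lc GL} {e : Hom (rL rho) Lc} {tLc : Hom Lc (rL' rho)}
  {k : Hom Kc Lc} {tKc : Hom Kc (rK' rho)} {eK : Hom (rK rho) Kc}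
  {rc : Hom Kc Rc} {eR : Hom (rR rho) Rc} {tRc : Hom Rc (rR' rho)}.
Hypotheses (HtLc : rtL rho = tLc \oc e)
  (HpbKc : IsPullback tLc (rl' rho) k tKc)
  (HkeK : k \oc eK = e \oc rl rho) (HtKc : tKc \oc eK = rtK rho)
  (HpoRc : IsPushout eK (rr rho) rc eR)
  (HtRc_rc : tRc \oc rc = rr' rho \oc tKc) (HtRc_eR : tRc \oc eR = rtR rho).

Lemma compacted_step_of_step (He : IsEpi e) (alpha : Hom GL (rL' rho)) (GR : C) :
  step rho GL GR (m' \oc e) alpha ->
  pbpo_step k rc tLc tKc tRc (rl' rho) (rr' rho) GL GR m' alpha.
Proof.
  intros [HtL [GK [gL [u' [HpbGK [u [Hu_l [Hu_t [gR [w [HpoGR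
    [w' [Hw'_g Hw'_w]]]]]]]]]]]]].
  assert (HtLc_alpha : tLc = alpha \oc m').
  { apply He. rewrite <- HtLc, HtL, comp_assoc. reflexivity. }
  split; [exact HtLc_alpha|].
  exists GK, gL, u'. split; [exact HpbGK|].
  destruct (proj2 HpbGK Kc (m' \oc k) tKc) as [uc [[Huc_l Huc_t] _]].
  { rewrite comp_assoc, <- HtLc_alpha. exact (proj1 HpbKc). }
  assert (Hu : uc \oc eK = u).
  { apply (pullback_jointly_mono HpbGK).
    - rewrite comp_assoc, Huc_l, <- comp_assoc, HkeK, comp_assoc, Hu_l.
      reflexivity.
    - rewrite comp_assoc, Huc_t, HtKc, Hu_t. reflexivity. }
  rewrite <- Hu in HpoGR.
  destruct (pushout_cancel_left HpoRc HpoGR) as [wc [Hwc HpoGRc]].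
  exists uc. split; [exact Huc_l|]. split; [exact Huc_t|].
  exists gR, wc. split; [exact HpoGRc|].
  exists w'. split; [exact Hw'_g|].
  apply (pushout_jointly_epi HpoRc).
  - rewrite <- comp_assoc, <- (proj1 HpoGRc), comp_assoc, Hw'_g,
      <- comp_assoc, Huc_t, HtRc_rc.
    reflexivity.
  - rewrite <- comp_assoc, Hwc, Hw'_w, HtRc_eR. reflexivity.
Qed.

Lemma step_of_compacted_step (alpha : Hom GL (rL' rho)) (GR : C) :
  pbpo_step k rc tLc tKc tRc (rl' rho) (rr' rho) GL GR m' alpha ->
  step rho GL GR (m' \oc e) alpha.
Proof.
  intros [HtLc_alpha [GK [gL [u' [HpbGK [uc [Huc_l [Huc_t [gR [wc [HpoGRc
    [w' [Hw'_g Hw'_w]]]]]]]]]]]]].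
  split.
  { rewrite HtLc, HtLc_alpha, comp_assoc. reflexivity. }
  exists GK, gL, u'. split; [exact HpbGK|].
  exists (uc \oc eK). split.
  { rewrite comp_assoc, Huc_l, <- comp_assoc, HkeK, comp_assoc. reflexivity. }
  split.
  { rewrite comp_assoc, Huc_t. exact HtKc. }
  exists gR, (wc \oc eR). split.
  { exact (pushout_paste HpoRc HpoGRc). }
  exists w'. split; [exact Hw'_g|].
  rewrite comp_assoc, Hw'_w. exact HtRc_eR.
Qed.

End CompactedStep.

Theorem lemma4 (C : Category) (rho : PBPORule C) (Hcan : canonical rho)
  (GL Lc : C) (m' : Hom Lc GL) (e : Hom (rL rho) Lc)
  (Hm' : IsMono m') (He : IsEpi e)
  (tLc : Hom Lc (rL' rho)) (HtLc : rtL rho = tLc \oc e)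
  (Kc Rc : C) (k : Hom Kc Lc) (tKc : Hom Kc (rK' rho)) (eK : Hom (rK rho) Kc)
  (rc : Hom Kc Rc) (eR : Hom (rR rho) Rc) (tRc : Hom Rc (rR' rho))
  (Hcomp : is_compaction rho e tLc k tKc eK rc eR tRc) :
  forall (alpha : Hom GL (rL' rho)) (GR : C),
    step rho GL GR (m' \oc e) alpha <->
    pbpo_step k rc tLc tKc tRc (rl' rho) (rr' rho) GL GR m' alpha.
Proof.
  destruct Hcomp as [HpbKc [HkeK [HtKc [HpoRc [HtRc_rc HtRc_eR]]]]].
  intros alpha GR. split.
  - exact (compacted_step_of_step HtLc HpbKc HkeK HtKc HpoRc HtRc_rc HtRc_eR
      He alpha GR).
  - exact (step_of_compacted_step HtLc HkeK HtKc HpoRc HtRc_eR alpha GR).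
Qed.
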